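(* Let $n\ge1$ be an integer, $\delta\in(0,1)$, and $\lambda=\frac{9n}{8\ln\frac{2}{\delta}}$. For $z\in[0,1]$ define \[ U(z)=z+\frac34\,\frac{1-2z+\sqrt{1+4\lambda z(1-z)}}{1+\lambda},\qquad L(z)=z+\frac34\,\frac{1-2z-\sqrt{1+4\lambda z(1-z)}}{1+\lambda}. \] Then $L(z)$ is monotonically increasing with respect to $z$ on the set of $z\in[0,1]$ such that $L(z)>0$. Similarly, $U(z)$ is monotonically increasing with respect to $z$ on the set of $z\in[0,1]$ such that $U(z)<1$. *)

From Stdlib Require Import Reals.
Open Scope R_scope.

Definition lam (n : nat) (delta : R) : R := 9 * INR n / (8 * ln (2 / delta)).

Definition Ufun (n : nat) (delta z : R) : R :=
  z + 3/4 * ((1 - 2*z + sqrt (1 + 4 * lam n delta * z * (1 - z))) / (1 + lam n delta)).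

Definition Lfun (n : nat) (delta z : R) : R :=
  z + 3/4 * ((1 - 2*z - sqrt (1 + 4 * lam n delta * z * (1 - z))) / (1 + lam n delta)).

(* Write [L z = z + c (1 - 2 z - S z)] with [S z = sqrt (1 + 4 l z (1 - z))]
   and [c = 3 / (4 (1 + l)) >= 0].  Since [S] is concave with [S 0 = 1], its
   chords from [0] have decreasing slopes, i.e. [(S z - 1) / z] decreases, so
   [L z / z] increases.  An increasing ratio [L z / z] forces [L z1 <= L z2]
   for [z1 <= z2] as soon as [L z2 > 0].  The statement for [U] follows from
   the symmetry [U z = 1 - L (1 - z)]. *)

From Stdlib Require Import Reals Lra Psatz.
Open Scope R_scope.

Lemma sqrt_weighted_le p q a b : 0 <= p -> 0 <= q -> 0 <= a -> 0 <= b ->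
  p * sqrt a + q * sqrt b <= sqrt ((p + q) * (p * a + q * b)).
Proof.
  intros Hp Hq Ha Hb.
  pose proof (sqrt_pos a) as Hsa; pose proof (sqrt_pos b) as Hsb.
  assert (Hlhs : 0 <= p * sqrt a + q * sqrt b) by nra.
  rewrite <- (sqrt_square _ Hlhs); apply sqrt_le_1_alt.
  assert (Hamgm : 0 <= p * q * ((sqrt a - sqrt b) * (sqrt a - sqrt b)))
    by (apply Rmult_le_pos; [nra | apply Rle_0_sqr]).
  pose proof (sqrt_sqrt a Ha) as Ea; pose proof (sqrt_sqrt b Hb) as Eb.
  revert Ea Eb Hamgm; generalize (sqrt a) (sqrt b); intros x y <- <- Hamgm.
  nra.
Qed.

Section Bound.

Variables l c : R.
Hypothesis l_ge0 : 0 <= l.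
Hypothesis c_ge0 : 0 <= c.

Definition root_term (z : R) : R := sqrt (1 + 4 * l * z * (1 - z)).

Definition lower_bound (z : R) : R := z + c * (1 - 2 * z - root_term z).

Lemma radicand_ge0 z : 0 <= z <= 1 -> 0 <= 1 + 4 * l * z * (1 - z).
Proof.
  intros Hz; assert (0 <= l * (z * (1 - z))) by (apply Rmult_le_pos; nra).
  nra.
Qed.

(* Concavity of [root_term] at [z1 = (z1/z2) z2 + (1 - z1/z2) 0], cleared of
   denominators; the value at [0] is [1]. *)
Lemma root_term_chord z1 z2 : 0 <= z1 -> z1 <= z2 -> z2 <= 1 ->
  z1 * root_term z2 + (z2 - z1) <= z2 * root_term z1.
Proof.
  intros H1 H12 H2; unfold root_term.
  pose proof (radicand_ge0 z1 ltac:(lra)) as Hr1.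
  pose proof (radicand_ge0 z2 ltac:(lra)) as Hr2.
  pose proof (sqrt_weighted_le z1 (z2 - z1) _ 1 H1 ltac:(lra) Hr2 ltac:(lra))
    as Hsqrt.
  rewrite sqrt_1, Rmult_1_r in Hsqrt.
  apply (Rle_trans _ _ _ Hsqrt).
  assert (Hrhs : z2 * sqrt (1 + 4 * l * z1 * (1 - z1))
                 = sqrt (z2 * (z2 * (1 + 4 * l * z1 * (1 - z1))))).
  { rewrite sqrt_mult, sqrt_mult, <- Rmult_assoc, sqrt_sqrt; nra. }
  rewrite Hrhs; apply sqrt_le_1_alt.
  replace ((z1 + (z2 - z1)) * (z1 * (1 + 4 * l * z2 * (1 - z2)) + (z2 - z1)))
    with (z2 * (z1 * (1 + 4 * l * z2 * (1 - z2)) + (z2 - z1))) by ring.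
  apply Rmult_le_compat_l; [lra |].
  assert (0 <= l * (z1 * (z2 * (z2 - z1))))
    by (repeat apply Rmult_le_pos; lra).
  nra.
Qed.

Lemma lower_bound_ratio_le z1 z2 : 0 <= z1 -> z1 <= z2 -> z2 <= 1 ->
  z2 * lower_bound z1 <= z1 * lower_bound z2.
Proof.
  intros H1 H12 H2; pose proof (root_term_chord z1 z2 H1 H12 H2).
  unfold lower_bound.
  assert (0 <= c * (z2 * root_term z1
                    - (z1 * root_term z2 + (z2 - z1))))
    by (apply Rmult_le_pos; lra).
  nra.
Qed.

End Bound.

Lemma le_of_ratio_le (h : R -> R) z1 z2 : 0 <= z1 -> z1 <= z2 ->
  z2 * h z1 <= z1 * h z2 -> 0 < h z2 -> h z1 <= h z2.
Proof.
  intros H1 H12 Hratio Hpos.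
  destruct (Req_dec z1 z2) as [-> | Hne]; [lra |].
  assert (z1 * h z2 <= z2 * h z2) by nra.
  nra.
Qed.

Lemma lower_bound_mono l c z1 z2 : 0 <= l -> 0 <= c ->
  0 <= z1 -> z1 <= z2 -> z2 <= 1 ->
  0 < lower_bound l c z2 -> lower_bound l c z1 <= lower_bound l c z2.
Proof.
  intros Hl Hc H1 H12 H2; apply le_of_ratio_le; auto.
  exact (lower_bound_ratio_le l c Hl Hc z1 z2 H1 H12 H2).
Qed.

Lemma lam_ge0 n delta : 0 < delta < 1 -> 0 <= lam n delta.
Proof.
  intros Hd; unfold lam.
  assert (Hlog : 0 < ln (2 / delta)).
  { rewrite <- ln_1; apply ln_increasing; [lra |].
    apply (Rmult_lt_reg_r delta); [lra |].
    unfold Rdiv; rewrite Rmult_assoc, Rinv_l; lra. }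
  pose proof (pos_INR n).
  apply Rmult_le_pos; [lra |].
  apply Rlt_le, Rinv_0_lt_compat; lra.
Qed.

Theorem lemma2 (n : nat) (delta : R) :
  (1 <= n)%nat -> 0 < delta < 1 ->
  (forall z1 z2 : R,
     0 <= z1 <= 1 -> 0 <= z2 <= 1 ->
     0 < Lfun n delta z1 -> 0 < Lfun n delta z2 ->
     z1 <= z2 -> Lfun n delta z1 <= Lfun n delta z2) /\
  (forall z1 z2 : R,
     0 <= z1 <= 1 -> 0 <= z2 <= 1 ->
     Ufun n delta z1 < 1 -> Ufun n delta z2 < 1 ->
     z1 <= z2 -> Ufun n delta z1 <= Ufun n delta z2).
Proof.
  intros _ Hd.
  pose proof (lam_ge0 n delta Hd) as Hl.
  set (l := lam n delta) in *.
  set (c := 3 / 4 / (1 + l)).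
  assert (Hc : 0 <= c) by (apply Rlt_le, Rdiv_lt_0_compat; lra).
  assert (EL : forall z, Lfun n delta z = lower_bound l c z).
  { intro z; unfold Lfun, lower_bound, root_term, c; fold l.
    field; lra. }
  assert (EU : forall z, Ufun n delta z = 1 - lower_bound l c (1 - z)).
  { intro z; unfold Ufun, lower_bound, root_term, c; fold l.
    replace (1 + 4 * l * (1 - z) * (1 - (1 - z)))
      with (1 + 4 * l * z * (1 - z)) by ring.
    field; lra. }
  split.
  - intros z1 z2 H1 H2 _ HL H12; rewrite !EL in *.
    apply lower_bound_mono; lra.
  - intros z1 z2 H1 H2 HU _ H12; rewrite !EU in *.
    enough (lower_bound l c (1 - z2) <= lower_bound l c (1 - z1)) by lra.
    apply lower_bound_mono; lra.
Qed.
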